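(* Let $\Lambda\in\mathbb{N}$, let $k\ge\Lambda^2(\Lambda+1)^2$, and let $\bm{\chi}=\sum_{m=-\Lambda}^{\Lambda}\cos\!\left(\frac{\pi m}{2\Lambda+2}\right)\psi_m\in\mathcal{H}_\Lambda$. Then $$(\Delta\bm{x})^2_{\bm{\chi}}<\frac{3.5}{(\Lambda+1)^2}.$$
   Context: (Fuzzy circle $S^1_\Lambda$.) $\mathcal{H}_\Lambda$ is a $(2\Lambda+1)$-dimensional Hilbert space with orthonormal basis $\{\psi_n\}_{n=-\Lambda}^{\Lambda}$. Operators: $x_+\psi_n=b_{n+1}\psi_{n+1}$, $x_-\psi_n=b_n\psi_{n-1}$, where $b_n=\sqrt{1+n(n-1)/k}$ if $1-\Lambda\le n\le\Lambda$ and $b_n=0$ otherwise; $x_1=(x_++x_-)/2$, $x_2=(x_+-x_-)/(2i)$, $\bm{x}^2=x_1^2+x_2^2$. For a nonzero vector $\bm{\chi}$, $\langle A\rangle_{\bm\chi}=\langle\bm{\chi},A\bm{\chi}\rangle/\langle\bm\chi,\bm\chi\rangle$ and $(\Delta\bm{x})^2_{\bm\chi}=\langle\bm{x}^2\rangle_{\bm\chi}-\langle x_1\rangle_{\bm\chi}^2-\langle x_2\rangle_{\bm\chi}^2$. *)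

From Stdlib Require Import Reals ZArith.
From Coquelicot Require Import Coquelicot.
Open Scope R_scope.

(* A vector of H_Lambda is represented by its coefficient function
   n |-> <psi_n, v> on Z; only the indices -Lambda <= n <= Lambda matter
   (the operators below preserve the support [-Lambda, Lambda]). *)
Definition vec := Z -> C.

Definition bcoef (k : R) (Lam : nat) (n : Z) : R :=
  if andb (1 - Z.of_nat Lam <=? n)%Z (n <=? Z.of_nat Lam)%Z
  then sqrt (1 + IZR n * IZR (n - 1) / k) else 0.

(* x_+ psi_n = b_{n+1} psi_{n+1}  ==> (x_+ v)_n = b_n v_{n-1} *)
Definition xplus (k : R) (Lam : nat) (v : vec) : vec :=
  fun n => Cmult (RtoC (bcoef k Lam n)) (v (n - 1)%Z).
(* x_- psi_n = b_n psi_{n-1}  ==> (x_- v)_n = b_{n+1} v_{n+1} *)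
Definition xminus (k : R) (Lam : nat) (v : vec) : vec :=
  fun n => Cmult (RtoC (bcoef k Lam (n + 1)%Z)) (v (n + 1)%Z).

Definition x1 (k : R) (Lam : nat) (v : vec) : vec :=
  fun n => Cdiv (Cplus (xplus k Lam v n) (xminus k Lam v n)) (RtoC 2).
Definition x2 (k : R) (Lam : nat) (v : vec) : vec :=
  fun n => Cdiv (Cminus (xplus k Lam v n) (xminus k Lam v n)) (Cmult (RtoC 2) Ci).
Definition xsq (k : R) (Lam : nat) (v : vec) : vec :=
  fun n => Cplus (x1 k Lam (x1 k Lam v) n) (x2 k Lam (x2 k Lam v) n).

Fixpoint csum (f : nat -> C) (N : nat) : C :=
  match N with
  | O => f O
  | S N' => Cplus (csum f N') (f N)
  end.

Definition inner (Lam : nat) (u v : vec) : C :=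
  csum (fun j => let n := (Z.of_nat j - Z.of_nat Lam)%Z in
                 Cmult (Cconj (u n)) (v n)) (2 * Lam).

Definition expect (Lam : nat) (A : vec -> vec) (chi : vec) : C :=
  Cdiv (inner Lam chi (A chi)) (inner Lam chi chi).

Definition uncert (k : R) (Lam : nat) (chi : vec) : C :=
  Cminus (Cminus (expect Lam (xsq k Lam) chi)
                 (Cmult (expect Lam (x1 k Lam) chi) (expect Lam (x1 k Lam) chi)))
         (Cmult (expect Lam (x2 k Lam) chi) (expect Lam (x2 k Lam) chi)).

Definition chi_state (Lam : nat) : vec :=
  fun n => if andb (- Z.of_nat Lam <=? n)%Z (n <=? Z.of_nat Lam)%Z
           then RtoC (cos (PI * IZR n / (2 * INR Lam + 2))) else RtoC 0.

From Stdlib Require Import Reals ZArith Lra Lia FunctionalExtensionality.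
From Coquelicot Require Import Coquelicot.
Open Scope R_scope.

(* Since chi is real and nonnegative, <x_2> = 0 and <x_1> is the normalised
   hopping sum  sum_n b_n chi_n chi_(n-1).  On the support of chi all b_n are
   >= 1, and chi, which vanishes at +-(Lambda+1), is an eigenvector of the
   discrete Laplacian: chi_(n-1) + chi_(n+1) = 2 cos(theta) chi_n with
   theta = pi / (2 Lambda + 2); hence <x_1> >= cos(theta).  Moreover
   b_n^2 <= 1 + Lambda^2 / k <= 1 + 1/(Lambda+1)^2 bounds <x^2>, so
   (Delta x)^2 <= 1/(Lambda+1)^2 + sin(theta)^2
              < (1 + pi^2/4) / (Lambda+1)^2 < 3.5 / (Lambda+1)^2. *)

Lemma PI_lt_316 : PI < 316 / 100.
Proof.
  destruct (PI_2_3_7_ineq 1) as [_ H].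
  unfold tg_alt, PI_2_3_7_tg, Ratan_seq in H; simpl in H.
  lra.
Qed.

Lemma one_sub_cos_sq_lt x : 0 < x <= PI -> 1 - cos x ^ 2 < x ^ 2.
Proof.
  intros [hx hxPI].
  assert (hsin := sin_lt_x x hx).
  assert (hsin0 := sin_ge_0 x (Rlt_le _ _ hx) hxPI).
  assert (hsc := sin2_cos2 x); unfold Rsqr in hsc.
  nra.
Qed.

Lemma sum_f_R0_ge_term (g : nat -> R) N j0 :
  (forall j, (j <= N)%nat -> 0 <= g j) -> (j0 <= N)%nat -> g j0 <= sum_f_R0 g N.
Proof.
  revert j0; induction N as [|N IH]; intros j0 Hg Hj; simpl.
  - replace j0 with 0%nat by lia; lra.
  - assert (IH' : forall j, (j <= N)%nat -> g j <= sum_f_R0 g N)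
      by (intros j hj; apply IH; [intros; apply Hg|]; lia).
    assert (h0 := Hg 0%nat ltac:(lia)); assert (hS := Hg (S N) ltac:(lia)).
    destruct (Nat.eq_dec j0 (S N)) as [->|ne].
    + assert (IH0 := IH' 0%nat ltac:(lia)); lra.
    + assert (IHj := IH' j0 ltac:(lia)); lra.
Qed.

Definition sum_sym (L : nat) (f : Z -> R) : R :=
  sum_f_R0 (fun j => f (Z.of_nat j - Z.of_nat L)%Z) (2 * L).

Section SymmetricSums.

Variable L : nat.

Lemma sum_sym_ext f g :
  (forall n, (- Z.of_nat L <= n <= Z.of_nat L)%Z -> f n = g n) ->
  sum_sym L f = sum_sym L g.
Proof. intros H; apply sum_eq; intros j hj; apply H; lia. Qed.

Lemma sum_sym_le f g :
  (forall n, (- Z.of_nat L <= n <= Z.of_nat L)%Z -> f n <= g n) ->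
  sum_sym L f <= sum_sym L g.
Proof. intros H; apply sum_Rle; intros j hj; apply H; lia. Qed.

Lemma sum_sym_ge_term f n0 :
  (forall n, (- Z.of_nat L <= n <= Z.of_nat L)%Z -> 0 <= f n) ->
  (- Z.of_nat L <= n0 <= Z.of_nat L)%Z -> f n0 <= sum_sym L f.
Proof.
  intros Hf Hn0.
  replace n0 with (Z.of_nat (Z.to_nat (n0 + Z.of_nat L)) - Z.of_nat L)%Z at 1 by lia.
  apply (sum_f_R0_ge_term (fun j => f (Z.of_nat j - Z.of_nat L)%Z)); [|lia].
  intros j hj; apply Hf; lia.
Qed.

Lemma sum_sym_plus f g :
  sum_sym L (fun n => f n + g n) = sum_sym L f + sum_sym L g.
Proof. apply plus_sum. Qed.

Lemma sum_sym_scal a f : sum_sym L (fun n => a * f n) = a * sum_sym L f.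
Proof. unfold sum_sym; rewrite scal_sum; apply sum_eq; intros; ring. Qed.

Lemma sum_sym_eq0 f :
  (forall n, (- Z.of_nat L <= n <= Z.of_nat L)%Z -> f n = 0) -> sum_sym L f = 0.
Proof.
  intros H; rewrite <- (Rmult_0_l (sum_sym L f)), <- sum_sym_scal.
  apply sum_sym_ext; intros n hn; rewrite H by exact hn; ring.
Qed.

Lemma sum_sym_shift f :
  f (- Z.of_nat L)%Z = 0 -> f (Z.of_nat L + 1)%Z = 0 ->
  sum_sym L (fun n => f (n + 1)%Z) = sum_sym L f.
Proof.
  intros hlo hhi; unfold sum_sym.
  set (g j := f (Z.of_nat j - Z.of_nat L)%Z).
  assert (hg0 : g 0%nat = 0) by (rewrite <- hlo; unfold g; f_equal; lia).
  assert (hgS : g (S (2 * L)) = 0) by (rewrite <- hhi; unfold g; f_equal; lia).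
  transitivity (sum_f_R0 (fun j => g (S j)) (2 * L)).
  { apply sum_eq; intros j _; unfold g; f_equal; lia. }
  assert (H := decomp_sum g (S (2 * L)) ltac:(lia)).
  rewrite tech5 in H; cbn [Nat.pred] in H.
  lra.
Qed.

End SymmetricSums.

Definition rvec (c : Z -> R) : vec := fun n => RtoC (c n).

Lemma Re_csum f N : Re (csum f N) = sum_f_R0 (fun j => Re (f j)) N.
Proof. induction N as [|N IH]; simpl; [reflexivity|]; rewrite <- IH; reflexivity. Qed.

Lemma Im_csum f N : Im (csum f N) = sum_f_R0 (fun j => Im (f j)) N.
Proof. induction N as [|N IH]; simpl; [reflexivity|]; rewrite <- IH; reflexivity. Qed.

Lemma inner_rvec_l L c w :
  inner L (rvec c) w =
  (sum_sym L (fun n => c n * Re (w n)), sum_sym L (fun n => c n * Im (w n))).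
Proof.
  unfold inner; apply injective_projections; simpl fst; simpl snd;
    [rewrite Re_csum | rewrite Im_csum];
    apply sum_eq; intros j _; unfold rvec, RtoC; destruct (w _); simpl; ring.
Qed.

Lemma bcoef_outside k L n :
  ~ (1 - Z.of_nat L <= n <= Z.of_nat L)%Z -> bcoef k L n = 0.
Proof.
  intros H; unfold bcoef.
  destruct (Z.leb_spec (1 - Z.of_nat L) n), (Z.leb_spec n (Z.of_nat L));
    simpl; auto; lia.
Qed.

Section RealVector.

Variables (k : R) (L : nat) (c : Z -> R).

Let b := bcoef k L.

Lemma x1_rvec n :
  x1 k L (rvec c) n = RtoC ((b n * c (n - 1) + b (n + 1) * c (n + 1)) / 2).
Proof.
  unfold x1, xplus, xminus, rvec, b; apply injective_projections;
    unfold Cdiv, Cinv, Cmult, Cplus, RtoC; simpl; field.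
Qed.

Lemma x2_rvec n :
  x2 k L (rvec c) n = (0, (b (n + 1) * c (n + 1) - b n * c (n - 1)) / 2).
Proof.
  unfold x2, xplus, xminus, rvec, b; apply injective_projections;
    unfold Cdiv, Cinv, Cmult, Cminus, Cplus, Copp, Ci, RtoC; simpl; field.
Qed.

Lemma xsq_rvec n :
  xsq k L (rvec c) n = RtoC ((b n ^ 2 + b (n + 1) ^ 2) / 2 * c n).
Proof.
  unfold xsq, x1, x2, xplus, xminus, rvec, b.
  rewrite Z.sub_add, Z.add_simpl_r; apply injective_projections;
    unfold Cdiv, Cinv, Cmult, Cminus, Cplus, Copp, Ci, RtoC; simpl; field.
Qed.

(* b vanishes at -L and L+1, whatever c is. *)
Lemma sum_sym_hop_shift :
  sum_sym L (fun n => b (n + 1)%Z * c (n + 1)%Z * c (n + 1 - 1)%Z) =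
  sum_sym L (fun n => b n * c n * c (n - 1)%Z).
Proof.
  apply (sum_sym_shift L (fun n => b n * c n * c (n - 1)%Z));
    unfold b; rewrite bcoef_outside by lia; ring.
Qed.

Lemma inner_x1_rvec :
  inner L (rvec c) (x1 k L (rvec c)) =
  RtoC (sum_sym L (fun n => b n * c n * c (n - 1)%Z)).
Proof.
  rewrite inner_rvec_l; apply injective_projections; cbn [fst snd RtoC].
  - transitivity (sum_sym L (fun n => / 2 * (b n * c n * c (n - 1)%Z)
        + / 2 * (b (n + 1)%Z * c (n + 1)%Z * c (n + 1 - 1)%Z))).
    + apply sum_sym_ext; intros n _; rewrite x1_rvec, Z.add_simpl_r; simpl; field.
    + rewrite sum_sym_plus, !sum_sym_scal, sum_sym_hop_shift; field.
  - apply sum_sym_eq0; intros n _; rewrite x1_rvec; simpl; ring.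
Qed.

Lemma inner_x2_rvec : inner L (rvec c) (x2 k L (rvec c)) = 0.
Proof.
  rewrite inner_rvec_l; apply injective_projections; cbn [fst snd].
  - apply sum_sym_eq0; intros n _; rewrite x2_rvec; simpl; ring.
  - transitivity (sum_sym L (fun n => / 2 * (b (n + 1)%Z * c (n + 1)%Z * c (n + 1 - 1)%Z)
        + - / 2 * (b n * c n * c (n - 1)%Z))).
    + apply sum_sym_ext; intros n _; rewrite x2_rvec, Z.add_simpl_r; simpl; field.
    + rewrite sum_sym_plus, !sum_sym_scal, sum_sym_hop_shift; simpl; ring.
Qed.

Lemma inner_xsq_rvec :
  inner L (rvec c) (xsq k L (rvec c)) =
  RtoC (sum_sym L (fun n => (b n ^ 2 + b (n + 1)%Z ^ 2) / 2 * c n ^ 2)).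
Proof.
  rewrite inner_rvec_l; apply injective_projections; cbn [fst snd RtoC].
  - apply sum_sym_ext; intros n _; rewrite xsq_rvec; simpl; ring.
  - apply sum_sym_eq0; intros n _; rewrite xsq_rvec; simpl; ring.
Qed.

Lemma inner_rvec_rvec :
  inner L (rvec c) (rvec c) = RtoC (sum_sym L (fun n => c n ^ 2)).
Proof.
  rewrite inner_rvec_l; apply injective_projections; cbn [fst snd RtoC].
  - apply sum_sym_ext; intros n _; simpl; ring.
  - apply sum_sym_eq0; intros n _; simpl; ring.
Qed.

Lemma uncert_rvec :
  sum_sym L (fun n => c n ^ 2) <> 0 ->
  uncert k L (rvec c) =
  RtoC (sum_sym L (fun n => (b n ^ 2 + b (n + 1)%Z ^ 2) / 2 * c n ^ 2)
          / sum_sym L (fun n => c n ^ 2)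
        - (sum_sym L (fun n => b n * c n * c (n - 1)%Z)
             / sum_sym L (fun n => c n ^ 2)) ^ 2).
Proof.
  intros hN; unfold uncert, expect.
  rewrite inner_x1_rvec, inner_x2_rvec, inner_xsq_rvec, inner_rvec_rvec.
  apply injective_projections;
    unfold Cdiv, Cinv, Cmult, Cminus, Cplus, Copp, RtoC; simpl; field; auto.
Qed.

End RealVector.

Lemma Rinv_nonneg k : 0 <= k -> 0 <= / k.
Proof.
  intros [hk| <-]; [apply Rlt_le, Rinv_0_lt_compat; exact hk| rewrite Rinv_0; lra].
Qed.

Lemma bcoef_nonneg k L m : 0 <= bcoef k L m.
Proof. unfold bcoef; destruct (_ && _)%bool; [apply sqrt_pos| lra]. Qed.

Lemma bcoef_sq k L m :
  0 <= k -> (1 - Z.of_nat L <= m <= Z.of_nat L)%Z ->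
  bcoef k L m ^ 2 = 1 + IZR (m * (m - 1)) / k.
Proof.
  intros hk hm; unfold bcoef.
  replace (_ && _)%bool with true
    by (symmetry; apply andb_true_intro; split; apply Z.leb_le; lia).
  rewrite <- mult_IZR, pow2_sqrt; [reflexivity|].
  assert (0 <= IZR (m * (m - 1))) by (apply IZR_le; nia).
  assert (0 <= / k) by (apply Rinv_nonneg; exact hk).
  unfold Rdiv; nra.
Qed.

Lemma bcoef_ge_1 k L m :
  0 <= k -> (1 - Z.of_nat L <= m <= Z.of_nat L)%Z -> 1 <= bcoef k L m.
Proof.
  intros hk hm.
  assert (hsq := bcoef_sq k L m hk hm).
  assert (0 <= IZR (m * (m - 1))) by (apply IZR_le; nia).
  assert (0 <= / k) by (apply Rinv_nonneg; exact hk).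
  assert (0 <= bcoef k L m) by apply bcoef_nonneg.
  unfold Rdiv in hsq; nra.
Qed.

Lemma bcoef_sq_le k L m : 0 <= k -> bcoef k L m ^ 2 <= 1 + INR L ^ 2 / k.
Proof.
  intros hk.
  assert (hinv : 0 <= / k) by (apply Rinv_nonneg; exact hk).
  assert (0 <= INR L ^ 2 / k) by (apply Rmult_le_pos; [apply pow2_ge_0| exact hinv]).
  destruct (Z_le_dec (1 - Z.of_nat L) m), (Z_le_dec m (Z.of_nat L)).
  2-4: rewrite bcoef_outside by lia; lra.
  rewrite bcoef_sq by (auto; lia).
  apply Rplus_le_compat_l, Rmult_le_compat_r; [exact hinv|].
  rewrite INR_IZR_INZ, pow_IZR; apply IZR_le; simpl; nia.
Qed.

Lemma sq_div_le_inv_succ_sq x k :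
  0 <= x -> x ^ 2 * (x + 1) ^ 2 <= k -> x ^ 2 / k <= / (x + 1) ^ 2.
Proof.
  intros hx hk.
  destruct (Req_dec x 0) as [->|hx0].
  - unfold Rdiv; rewrite pow_i, Rmult_0_l by lia.
    apply Rlt_le, Rinv_0_lt_compat, pow_lt; lra.
  - assert (hpos : 0 < x ^ 2 * (x + 1) ^ 2)
      by (apply Rmult_lt_0_compat; apply pow_lt; lra).
    unfold Rdiv; apply Rle_trans with (x ^ 2 * / (x ^ 2 * (x + 1) ^ 2)).
    + apply Rmult_le_compat_l; [apply pow2_ge_0| apply Rinv_le_contravar; auto].
    + right; field; lra.
Qed.

Section HoppingEstimates.

Variables (k : R) (L : nat) (c : Z -> R).
Hypothesis hk : 0 <= k.

Lemma sum_xsq_le :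
  sum_sym L (fun n => (bcoef k L n ^ 2 + bcoef k L (n + 1)%Z ^ 2) / 2 * c n ^ 2)
  <= (1 + INR L ^ 2 / k) * sum_sym L (fun n => c n ^ 2).
Proof.
  rewrite <- sum_sym_scal; apply sum_sym_le; intros n _.
  assert (h0 := bcoef_sq_le k L n hk).
  assert (h1 := bcoef_sq_le k L (n + 1) hk).
  assert (hc := pow2_ge_0 (c n)).
  nra.
Qed.

Lemma sum_hop_ge :
  (forall n, 0 <= c n) -> c (- Z.of_nat L - 1)%Z = 0 ->
  sum_sym L (fun n => c n * c (n - 1)%Z)
  <= sum_sym L (fun n => bcoef k L n * c n * c (n - 1)%Z).
Proof.
  intros hc hlo; apply sum_sym_le; intros n hn.
  destruct (Z.eq_dec n (- Z.of_nat L)) as [->|ne].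
  - rewrite hlo, !Rmult_0_r; lra.
  - assert (1 <= bcoef k L n) by (apply bcoef_ge_1; [exact hk| lia]).
    assert (0 <= c n * c (n - 1)%Z) by (apply Rmult_le_pos; auto).
    nra.
Qed.

End HoppingEstimates.

Lemma sum_hop_eigen L c lam :
  c (- Z.of_nat L - 1)%Z = 0 -> c (Z.of_nat L + 1)%Z = 0 ->
  (forall n, (- Z.of_nat L <= n <= Z.of_nat L)%Z ->
     c (n - 1)%Z + c (n + 1)%Z = 2 * lam * c n) ->
  sum_sym L (fun n => c n * c (n - 1)%Z) = lam * sum_sym L (fun n => c n ^ 2).
Proof.
  intros hlo hhi hrec.
  assert (hshift : sum_sym L (fun n => c (n + 1)%Z * c (n + 1 - 1)%Z)
                   = sum_sym L (fun n => c n * c (n - 1)%Z)).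
  { apply (sum_sym_shift L (fun n => c n * c (n - 1)%Z));
      [rewrite hlo | rewrite Z.add_simpl_r, hhi]; ring. }
  apply (Rmult_eq_reg_l 2); [|lra].
  transitivity (sum_sym L (fun n => c n * c (n - 1)%Z
                                  + c (n + 1)%Z * c (n + 1 - 1)%Z)).
  { rewrite sum_sym_plus, hshift; ring. }
  rewrite <- Rmult_assoc, <- sum_sym_scal.
  apply sum_sym_ext; intros n hn; rewrite Z.add_simpl_r.
  replace (c n * c (n - 1)%Z + c (n + 1)%Z * c n)
    with (c n * (c (n - 1)%Z + c (n + 1)%Z)) by ring.
  rewrite hrec by exact hn; ring.
Qed.

Definition chi_coef (L : nat) (n : Z) : R :=
  if andb (- Z.of_nat L <=? n)%Z (n <=? Z.of_nat L)%Z
  then cos (PI * IZR n / (2 * INR L + 2)) else 0.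

Lemma chi_state_rvec L : chi_state L = rvec (chi_coef L).
Proof.
  apply functional_extensionality; intros n.
  unfold chi_state, rvec, chi_coef; destruct (_ && _)%bool; reflexivity.
Qed.

Lemma chi_coef_cos L n :
  (- Z.of_nat L - 1 <= n <= Z.of_nat L + 1)%Z ->
  chi_coef L n = cos (PI * IZR n / (2 * INR L + 2)).
Proof.
  intros hn; assert (hL := pos_INR L); unfold chi_coef.
  destruct (Z.leb_spec (- Z.of_nat L) n), (Z.leb_spec n (Z.of_nat L));
    simpl; [reflexivity| | |lia].
  - replace n with (Z.of_nat L + 1)%Z by lia.
    rewrite plus_IZR, <- INR_IZR_INZ.
    replace (PI * (INR L + 1) / (2 * INR L + 2)) with (PI / 2) by (field; lra).
    rewrite cos_PI2; reflexivity.
  - replace n with (- Z.of_nat L - 1)%Z by lia.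
    rewrite minus_IZR, opp_IZR, <- INR_IZR_INZ.
    replace (PI * (- INR L - 1) / (2 * INR L + 2)) with (- (PI / 2)) by (field; lra).
    rewrite cos_neg, cos_PI2; reflexivity.
Qed.

Lemma chi_coef_outside L n :
  ~ (- Z.of_nat L <= n <= Z.of_nat L)%Z -> chi_coef L n = 0.
Proof.
  intros hn; unfold chi_coef.
  destruct (Z.leb_spec (- Z.of_nat L) n), (Z.leb_spec n (Z.of_nat L));
    simpl; auto; lia.
Qed.

Lemma chi_coef_nonneg L n : 0 <= chi_coef L n.
Proof.
  destruct (Z_le_dec (- Z.of_nat L) n), (Z_le_dec n (Z.of_nat L)).
  2-4: rewrite chi_coef_outside by lia; lra.
  assert (hL := pos_INR L); assert (hPI := PI_RGT_0).
  rewrite chi_coef_cos by lia.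
  assert (hlo : - INR L <= IZR n)
    by (rewrite INR_IZR_INZ, <- opp_IZR; apply IZR_le; lia).
  assert (hhi : IZR n <= INR L) by (rewrite INR_IZR_INZ; apply IZR_le; lia).
  set (t := IZR n / (INR L + 1)).
  assert (ht : IZR n = t * (INR L + 1)) by (unfold t; field; lra).
  replace (PI * IZR n / (2 * INR L + 2)) with (PI / 2 * t) by (unfold t; field; lra).
  apply cos_ge_0; nra.
Qed.

Lemma chi_coef_0 L : chi_coef L 0 = 1.
Proof.
  rewrite chi_coef_cos by lia.
  unfold Rdiv; rewrite Rmult_0_r, Rmult_0_l; apply cos_0.
Qed.

Lemma chi_coef_recurrence L n :
  (- Z.of_nat L <= n <= Z.of_nat L)%Z ->
  chi_coef L (n - 1) + chi_coef L (n + 1)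
  = 2 * cos (PI / (2 * INR L + 2)) * chi_coef L n.
Proof.
  intros hn; assert (hL := pos_INR L).
  rewrite !chi_coef_cos by lia; rewrite minus_IZR, plus_IZR.
  set (D := 2 * INR L + 2).
  replace (PI * (IZR n - 1) / D) with (PI * IZR n / D - PI / D) by (unfold D; field; lra).
  replace (PI * (IZR n + 1) / D) with (PI * IZR n / D + PI / D) by (unfold D; field; lra).
  rewrite cos_minus, cos_plus; ring.
Qed.

Theorem mainTheorem7 (Lam : nat) (k : R)
  (hk : INR Lam ^ 2 * (INR Lam + 1) ^ 2 <= k) :
  Im (uncert k Lam (chi_state Lam)) = 0 /\
  Re (uncert k Lam (chi_state Lam)) < (7 / 2) / (INR Lam + 1) ^ 2.
Proof.
  set (c := chi_coef Lam); set (N := sum_sym Lam (fun n => c n ^ 2)).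
  set (th := PI / (2 * INR Lam + 2)); set (w := / (INR Lam + 1) ^ 2).
  assert (hLam := pos_INR Lam); assert (hPI := PI_RGT_0).
  assert (hk0 : 0 <= k) by (assert (h := pow2_ge_0 (INR Lam * (INR Lam + 1))); nra).
  assert (hN : 1 <= N).
  { unfold N; replace 1 with (c 0%Z ^ 2) by (unfold c; rewrite chi_coef_0; ring).
    apply (sum_sym_ge_term Lam (fun n => c n ^ 2)); [intros; apply pow2_ge_0| lia]. }
  rewrite chi_state_rvec, uncert_rvec by (fold c N; lra); fold c N; cbn [Re Im fst snd RtoC].
  set (B := sum_sym Lam (fun n => (bcoef k Lam n ^ 2 + bcoef k Lam (n + 1)%Z ^ 2) / 2 * c n ^ 2)).
  set (T := sum_sym Lam (fun n => bcoef k Lam n * c n * c (n - 1)%Z)).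
  split; [reflexivity|].
  assert (hx2 : B <= (1 + INR Lam ^ 2 / k) * N) by (apply sum_xsq_le; exact hk0).
  assert (hw : INR Lam ^ 2 / k <= w) by (apply sq_div_le_inv_succ_sq; assumption).
  assert (hx1 : cos th * N <= T).
  { unfold N, th; rewrite <- sum_hop_eigen by (unfold c; auto using chi_coef_recurrence;
                                  apply chi_coef_outside; lia).
    apply sum_hop_ge; [exact hk0| apply chi_coef_nonneg| apply chi_coef_outside; lia]. }
  assert (hth0 : 0 < th <= PI / 2).
  { unfold th; split; [apply Rdiv_lt_0_compat; lra|].
    unfold Rdiv; apply Rmult_le_compat_l; [lra| apply Rinv_le_contravar; lra]. }
  assert (hcos : 0 <= cos th) by (apply cos_ge_0; lra).
  assert (hsin := one_sub_cos_sq_lt th ltac:(lra)).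
  assert (hth : th ^ 2 = PI ^ 2 / 4 * w) by (unfold th, w; field; lra).
  assert (hPI2 : PI ^ 2 < 10) by (assert (h := PI_lt_316); nra).
  assert (hBN : B / N <= 1 + w) by (apply Rle_div_l; nra).
  assert (hTN : cos th <= T / N) by (apply Rle_div_r; lra).
  replace (7 / 2 / (INR Lam + 1) ^ 2) with (7 / 2 * w) by (unfold w; field; lra).
  assert (0 < w) by (apply Rinv_0_lt_compat, pow_lt; lra).
  nra.
Qed.
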